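(* Let $\Sigma\in\mathbb{R}^{p\times p}$ be positive definite and suppose $\Sigma=(I-B_0)^{-T}\Omega_0(I-B_0)^{-1}$ for some $B_0\in\mathbb{D}$ and $\Omega_0=\omega_0^2I$ with $\omega_0>0$. Then $B_0$ is the unique minimum-trace DAG, i.e. $B_0=\tilde B(\pi_0)$ for every $\pi_0\in\arg\min_\pi\operatorname{tr}\tilde\Omega(\pi)$.
   Context: $\mathbb{D}$ is the set of real $p\times p$ matrices whose directed graph (edge $i\to j$ iff $b_{ij}\ne0$) is acyclic. For a permutation $\pi$ of $[p]$, $(P_\pi A)_{ij}=a_{\pi(i)\pi(j)}$. For each $\pi$, write uniquely $P_\pi\Sigma^{-1}=(I-L)D^{-1}(I-L)^T$ with $L$ strictly lower triangular and $D$ diagonal with positive diagonal, and set $\tilde B(\pi)=P_{\pi^{-1}}L$, $\tilde\Omega(\pi)=P_{\pi^{-1}}D$. A minimum-trace permutation is any $\pi_0\in\arg\min_\pi\operatorname{tr}\tilde\Omega(\pi)$ and $\tilde B(\pi_0)$ is a minimum-trace DAG. *)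

From Stdlib Require Import ClassicalEpsilon.
From mathcomp Require Import all_boot all_order all_algebra all_fingroup.
From mathcomp Require Import reals.
Set Implicit Arguments. Unset Strict Implicit. Unset Printing Implicit Defensive.
Import Order.TTheory GRing.Theory Num.Theory.
Local Open Scope ring_scope.

Section Defs.
Variables (R : realType) (p : nat).

(* The set D: the directed graph (edge i -> j iff b_ij <> 0) is acyclic,
   i.e. no edge i -> j can be closed into a cycle by a path j ~> i
   (this also excludes self-loops b_ii <> 0). *)
Definition is_DAG (B : 'M[R]_p) : Prop :=
  forall i j : 'I_p, B i j != 0 -> ~~ connect (fun a b => B a b != 0) j i.

Definition permute (pi : 'S_p) (A : 'M[R]_p) : 'M[R]_p :=
  \matrix_(i, j) A (pi i) (pi j).

Definition posdef (S : 'M[R]_p) : Prop :=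
  S^T = S /\ forall x : 'cV[R]_p, x != 0 -> 0 < (x^T *m S *m x) 0 0.

Definition strictly_lower (L : 'M[R]_p) : Prop :=
  forall i j : 'I_p, (i <= j)%N -> L i j = 0.

Definition pos_diag (D : 'M[R]_p) : Prop :=
  is_diag_mx D /\ forall i : 'I_p, 0 < D i i.

Definition is_LDL (Sigma : 'M[R]_p) (pi : 'S_p) (L D : 'M[R]_p) : Prop :=
  [/\ strictly_lower L, pos_diag D &
      permute pi (invmx Sigma) = (1%:M - L) *m invmx D *m (1%:M - L)^T].

(* The (unique, for positive definite Sigma) pair (L, D), chosen by epsilon. *)
Definition LDL_pair (Sigma : 'M[R]_p) (pi : 'S_p) : 'M[R]_p * 'M[R]_p :=
  epsilon (inhabits (0, 0)) (fun LD => is_LDL Sigma pi LD.1 LD.2).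

Definition Btilde (Sigma : 'M[R]_p) (pi : 'S_p) : 'M[R]_p :=
  permute pi^-1 (LDL_pair Sigma pi).1.

Definition Omegatilde (Sigma : 'M[R]_p) (pi : 'S_p) : 'M[R]_p :=
  permute pi^-1 (LDL_pair Sigma pi).2.

Definition min_trace_perm (Sigma : 'M[R]_p) (pi0 : 'S_p) : Prop :=
  forall pi : 'S_p, \tr (Omegatilde Sigma pi0) <= \tr (Omegatilde Sigma pi).

End Defs.

From mathcomp Require Import all_boot all_order all_algebra all_fingroup.
From mathcomp Require Import reals.
From Stdlib Require Import ClassicalEpsilon.
Set Implicit Arguments. Unset Strict Implicit. Unset Printing Implicit Defensive.
Import Order.TTheory GRing.Theory Num.Theory.
Local Open Scope ring_scope.

(* With C := 1 - B0 and a := omega0^-2 we have P_pi Sigma^-1 = a G G^T for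
   G := P_pi C, a unit-diagonal matrix of determinant 1; the LDL factors of
   P_pi Sigma^-1 exist by Gram-Schmidt on the rows of G.  If pi is a topological
   order of B0 then G is itself unit lower triangular, so uniqueness of the LDL
   decomposition gives D(pi) = omega0^2 I and tr D(pi) = p omega0^2.  For every
   pi, det D(pi) = omega0^(2p), so by AM-GM tr D(pi) >= p omega0^2 with equality
   only for D(pi) = omega0^2 I: a minimum-trace pi0 has D(pi0) = omega0^2 I.
   Then (1 - L)(1 - L)^T = G G^T with 1 - L unit lower triangular and G unit
   diagonal; comparing rows top-down (the squared norm of row k forces the
   entries of G right of the diagonal to vanish) gives 1 - L = G, i.e.
   L = P_pi0 B0. *)

Section Permute.
Variables (R : realType) (n : nat).
Implicit Types (A B : 'M[R]_n) (pi : 'S_n).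

Lemma permuteE pi A : permute pi A = perm_mx pi *m A *m perm_mx pi^-1.
Proof. by rewrite -row_permE -col_permE; apply/matrixP=> i j; rewrite !mxE. Qed.

Lemma permuteM pi A B : permute pi (A *m B) = permute pi A *m permute pi B.
Proof.
apply/matrixP=> i j; rewrite !mxE (reindex_inj (@perm_inj _ pi)).
by apply: eq_bigr => l _; rewrite !mxE.
Qed.

Lemma permute1 pi : permute pi 1%:M = 1%:M :> 'M[R]_n.
Proof. by apply/matrixP=> i j; rewrite !mxE (inj_eq (@perm_inj _ pi)). Qed.

Lemma permuteB pi A B : permute pi (A - B) = permute pi A - permute pi B.
Proof. by apply/matrixP=> i j; rewrite !mxE. Qed.

Lemma permuteZ pi a A : permute pi (a *: A) = a *: permute pi A.
Proof. by apply/matrixP=> i j; rewrite !mxE. Qed.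

Lemma permute_trmx pi A : permute pi A^T = (permute pi A)^T.
Proof. by apply/matrixP=> i j; rewrite !mxE. Qed.

Lemma permuteK pi A : permute pi^-1 (permute pi A) = A.
Proof. by apply/matrixP=> i j; rewrite !mxE !permKV. Qed.

Lemma det_permute pi A : \det (permute pi A) = \det A.
Proof.
rewrite permuteE !det_mulmx mulrC mulrA -det_mulmx -perm_mxM mulVg perm_mx1.
by rewrite det1 mul1r.
Qed.

Lemma mxtrace_permute pi A : \tr (permute pi A) = \tr A.
Proof.
rewrite /mxtrace (reindex_inj (@perm_inj _ pi^-1)).
by apply: eq_bigr => i _; rewrite !mxE permKV.
Qed.

End Permute.

Section DAG.
Variables (R : realType) (n : nat) (B : 'M[R]_n).
Hypothesis B_DAG : is_DAG B.

Lemma DAG_diag0 i : B i i = 0.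
Proof. by apply/eqP; apply: contraT => /B_DAG; rewrite connect0. Qed.

(* Sort the vertices by increasing number of descendants: every edge a -> b
   has strictly more descendants at a than at b. *)
Lemma DAG_topological_perm : exists pi : 'S_n, strictly_lower (permute pi B).
Proof.
pose E a b := B a b != 0.
pose r a := #|[set b | connect E a b]|.
have r_edge a b : E a b -> (r b < r a)%N.
  move=> Eab; apply/proper_card/properP; split.
    apply/subsetP => x; rewrite !inE; exact: connect_trans (connect1 Eab).
  by exists a; rewrite !inE ?connect0 ?B_DAG.
pose leT a b := (r a <= r b)%N.
have leT_trans : transitive leT by move=> ???; apply: leq_trans.
pose s := sort leT (enum 'I_n).
have size_s : size s = n by rewrite size_sort size_enum_ord.
have s_uniq : uniq s by rewrite sort_uniq enum_uniq.
have s_sorted : sorted leT s by apply/sort_sorted => x y; apply: leq_total.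
pose f (i : 'I_n) := nth i s i.
have fE i x : f i = nth x s i by rewrite /f (set_nth_default x) // size_s.
have f_inj : injective f.
  move=> i j; rewrite (fE i i) (fE j i) => /eqP.
  by rewrite nth_uniq ?size_s // => /eqP /val_inj.
exists (perm f_inj) => i j le_ij; rewrite mxE !permE.
apply/eqP; apply: contraT => /r_edge; rewrite (fE i i) (fE j i) ltnNge => /negP[].
by apply: (sorted_leq_nth leT_trans (fun x => leqnn _) i s_sorted); rewrite ?inE ?size_s.
Qed.

End DAG.

Section UnitLower.
Variables (R : comUnitRingType) (n : nat).
Implicit Types (A B : 'M[R]_n).

Definition unit_lower A := forall i j : 'I_n, (i <= j)%N -> A i j = (i == j)%:R.

Lemma unit_lower_trig A : unit_lower A -> is_trig_mx A.
Proof.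
by move=> Al; apply/is_trig_mxP => i j lt_ij; rewrite Al ?(ltnW lt_ij) // -val_eqE ltn_eqF.
Qed.

Lemma det_unit_lower A : unit_lower A -> \det A = 1.
Proof.
by move=> Al; rewrite det_trig ?unit_lower_trig //; apply: big1 => i _; rewrite Al ?eqxx.
Qed.

Lemma unit_lowerM A B : unit_lower A -> unit_lower B -> unit_lower (A *m B).
Proof.
move=> Al Bl i j le_ij; rewrite mxE (bigD1 i) //= Al // eqxx mul1r Bl //.
rewrite big1 ?addr0 // => l ne_li; have [lt_il|lt_li] := ltnP i l.
  by rewrite Al ?(ltnW lt_il) // -val_eqE (ltn_eqF lt_il) mul0r.
have lt_lj : (l < j)%N by apply: leq_trans le_ij; rewrite ltn_neqAle lt_li andbT.
by rewrite [B l j]Bl ?(ltnW lt_lj) // -val_eqE (ltn_eqF lt_lj) mulr0.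
Qed.

Lemma mulmx1_invmx A B : A *m B = 1%:M -> invmx A = B.
Proof.
move=> AB; have [uA _] := mulmx1_unit AB.
by rewrite -[RHS](mulKmx uA B) AB mulmx1.
Qed.

Lemma invmx_congr_scalar A w : A \in unitmx -> w \is a GRing.unit ->
  invmx ((invmx A)^T *m w%:M *m invmx A) = w^-1 *: (A *m A^T).
Proof.
move=> uA uw; apply: mulmx1_invmx.
rewrite -!mulmxA -scalemxAr [invmx A *m _]mulmxA mulVmx // mul1mx.
rewrite mul_scalar_mx scalerA mulrV // scale1r.
by rewrite -trmx_mul mulmxV // trmx1.
Qed.

Lemma mx_congr_diag_entry m (X Y : 'M[R]_(m, n)) (d : 'rV[R]_n) i k :
  (X *m diag_mx d *m Y^T) i k = \sum_j X i j * d 0 j * Y k j.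
Proof. by rewrite mul_mx_diag mxE; apply: eq_bigr => j _; rewrite !mxE. Qed.

End UnitLower.

Section StrictlyLower.
Variables (R : realType) (n : nat).

Lemma unit_lower1B (L : 'M[R]_n) : strictly_lower L -> unit_lower (1%:M - L).
Proof. by move=> Ll i j le_ij; rewrite !mxE Ll // subr0. Qed.

Lemma strictly_lower1B (A : 'M[R]_n) : unit_lower A -> strictly_lower (1%:M - A).
Proof. by move=> Al i j le_ij; rewrite !mxE Al // subrr. Qed.

Lemma invmx_pos_diag (D : 'M[R]_n) :
  pos_diag D -> invmx D = diag_mx (\row_i (D i i)^-1).
Proof.
move=> [/is_diag_mxP D_diag D_gt0]; apply: mulmx1_invmx.
apply/matrixP => i j; rewrite mul_mx_diag !mxE.
case: (eqVneq i j) => [->|ne_ij]; first by rewrite mulfV ?gt_eqF.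
by rewrite D_diag // mul0r.
Qed.

End StrictlyLower.

Lemma sum_ord_split3 (V : nmodType) n (F : 'I_n -> V) (k : 'I_n) :
  \sum_j F j = \sum_(j : 'I_n | (j < k)%N) F j + F k + \sum_(j : 'I_n | (k < j)%N) F j.
Proof.
rewrite (bigID (fun j : 'I_n => (j < k)%N)) /= -addrA; congr (_ + _).
rewrite (bigD1 k) /= ?ltnn //; congr (_ + _); apply: eq_bigl => j.
by rewrite -leqNgt -val_eqE ltn_neqAle eq_sym andbC.
Qed.

Lemma unit_lower_kernel (R : idomainType) n (T : 'M[R]_n) (e x : 'I_n -> R) k :
  unit_lower T -> (forall j, e j != 0) ->
  (forall i : 'I_n, (i < k)%N -> \sum_j T i j * e j * x j = 0) ->
  forall j : 'I_n, (j < k)%N -> x j = 0.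
Proof.
move=> Tl e_neq0 Tx0 j; have [m] := ubnP j; elim: m j => // m IHm j.
rewrite ltnS => le_jm lt_jk; move: (Tx0 j lt_jk).
rewrite (bigD1 j) //= big1 ?addr0 => [|l ne_lj].
  by rewrite Tl // eqxx mul1r => /eqP; rewrite mulf_eq0 (negPf (e_neq0 j)) => /eqP.
have [lt_lj|le_jl] := ltnP l j.
  by rewrite IHm ?mulr0 //; [apply: leq_trans le_jm | apply: ltn_trans lt_jk].
by rewrite Tl // eq_sym (negPf ne_lj) !mul0r.
Qed.

Section LDLUnique.
Variables (R : realFieldType) (n : nat) (T G : 'M[R]_n) (e f : 'rV[R]_n).
Hypotheses (T_unit_lower : unit_lower T) (G_diag1 : forall i, G i i = 1).
Hypotheses (e_gt0 : forall j, 0 < e 0 j) (f_gt0 : forall j, 0 < f 0 j).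
Hypothesis TeT_GfG : T *m diag_mx e *m T^T = G *m diag_mx f *m G^T.

Let rows_eq_upto (k : nat) :=
  forall i : 'I_n, (i < k)%N -> (forall j, G i j = T i j) /\ e 0 i = f 0 i.

Let TeT_GfG_entry i k :
  \sum_j T i j * e 0 j * T k j = \sum_j G i j * f 0 j * G k j.
Proof. by rewrite -!mx_congr_diag_entry TeT_GfG. Qed.

Let T_upper0 : forall i j : 'I_n, (i < j)%N -> T i j = 0.
Proof. exact/is_trig_mxP/unit_lower_trig. Qed.

Lemma LDL_row_lower_eq (k : 'I_n) : rows_eq_upto k ->
  forall j : 'I_n, (j < k)%N -> G k j = T k j.
Proof.
move=> IH j lt_jk; apply/esym/eqP; rewrite -subr_eq0; apply/eqP; move: j lt_jk.
apply: (unit_lower_kernel T_unit_lower (e := fun j => e 0 j)) => [j|i lt_ik].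
  by rewrite gt_eqF.
under eq_bigr do rewrite mulrBr.
rewrite sumrB TeT_GfG_entry; apply/eqP; rewrite subr_eq0; apply/eqP.
apply: eq_bigr => j _; have [le_ji|lt_ij] := leqP j i.
  by have [_ ->] := IH j (leq_ltn_trans le_ji lt_ik); rewrite (proj1 (IH i lt_ik)).
by rewrite (proj1 (IH i lt_ik)) T_upper0 // !mul0r.
Qed.

Lemma LDL_diag_entry (k : 'I_n) : rows_eq_upto k ->
  e 0 k = f 0 k + \sum_(j : 'I_n | (k < j)%N) G k j * f 0 j * G k j.
Proof.
move=> IH; have := TeT_GfG_entry k k; rewrite !(sum_ord_split3 _ k).
rewrite [X in X + _ + _ = _](eq_bigr (fun j => G k j * f 0 j * G k j)) => [|j lt_jk].
  rewrite [X in _ + X = _]big1 => [|j lt_kj]; last by rewrite T_upper0 // mulr0.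
  by rewrite G_diag1 T_unit_lower // eqxx !mulr1 !mul1r addr0 -addrA => /addrI.
by rewrite (LDL_row_lower_eq IH) // (proj2 (IH j lt_jk)).
Qed.

Lemma LDL_unique : is_trig_mx G \/ e = f -> G = T /\ e = f.
Proof.
move=> G_lower_or_eq.
suff rows_eq k : (forall j, G k j = T k j) /\ e 0 k = f 0 k.
  split; first by apply/matrixP => i j; have [->] := rows_eq i.
  by apply/rowP => j; have [_ ->] := rows_eq j.
have [m] := ubnP k; elim: m k => // m IHm k; rewrite ltnS => le_km.
have IH : rows_eq_upto k by move=> i lt_ik; apply: IHm; apply: leq_trans le_km.
have diag_k := LDL_diag_entry IH.
suff upper_k (j : 'I_n) : (k < j)%N -> G k j = 0.
  split; last by rewrite diag_k big1 ?addr0 // => j /upper_k ->; rewrite !mul0r.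
  move=> j; have [lt_jk|lt_kj|/val_inj ->] := ltngtP j k.
  - exact: LDL_row_lower_eq.
  - by rewrite upper_k // T_upper0.
  - by rewrite G_diag1 T_unit_lower // eqxx.
case: G_lower_or_eq => [/is_trig_mxP G_lower|ef]; first exact: G_lower.
move=> lt_kj; move: diag_k; rewrite ef -{1}[f 0 k]addr0 => /addrI /esym /eqP.
rewrite psumr_eq0 => [/allP upper0|l _]; last first.
  by rewrite mulrAC -expr2 mulr_ge0 ?sqr_ge0 ?ltW.
move: (upper0 j (mem_index_enum j)); rewrite lt_kj mulrAC mulf_eq0.
by rewrite (gt_eqF (f_gt0 j)) orbF mulf_eq0 orbb => /eqP.
Qed.

End LDLUnique.

Section GramSchmidt.
Variables (R : realFieldType) (n : nat).
Implicit Types (N H : 'M[R]_n) (k : 'I_n).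

Definition diag_upto (m : nat) N :=
  forall i j : 'I_n, i != j -> (i < m)%N || (j < m)%N -> N i j = 0.

(* Left multiplication by [1 - elim_mx N k] subtracts [N i k / N k k] times
   row [k] from each row [i > k]; for [N = H H^T] this is one Gram-Schmidt
   step on the rows of [H]. *)
Definition elim_mx N k : 'M[R]_n :=
  \matrix_(i, j) (if (j == k) && (k < i)%N then N i k / N k k else 0).

Lemma elim_mx_mull N k (X : 'M[R]_n) i j :
  (elim_mx N k *m X) i j = elim_mx N k i k * X k j.
Proof.
rewrite mxE (bigD1 k) //= big1 ?addr0 // => l ne_lk.
by rewrite mxE (negPf ne_lk) mul0r.
Qed.

Lemma elim_mx_sqr N k : elim_mx N k *m elim_mx N k = 0.
Proof. by apply/matrixP => i j; rewrite elim_mx_mull [_ k j]mxE ltnn andbF mulr0 mxE. Qed.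

Lemma congr_elim_mx_entry N k (X : 'M[R]_n) i j :
  ((1%:M - elim_mx N k) *m X *m (1%:M - elim_mx N k)^T) i j =
  X i j - elim_mx N k i k * X k j - X i k * elim_mx N k j k
  + elim_mx N k i k * X k k * elim_mx N k j k.
Proof.
set S := elim_mx N k; rewrite linearB /= trmx1 mulmxBr mulmx1 !mulmxBl !mul1mx.
have mulST Y a b : (Y *m S^T) a b = Y a k * S b k.
  rewrite mxE (bigD1 k) //= big1 ?addr0 ?mxE // => l ne_lk.
  by rewrite !mxE (negPf ne_lk) mulr0.
have entryB (A B : 'M[R]_n) a b : (A - B) a b = A a b - B a b by rewrite !mxE.
by rewrite !entryB !mulST !elim_mx_mull opprB addrA addrAC.
Qed.

Lemma diag_upto_congr_elim N k : N^T = N -> N k k != 0 -> diag_upto k N ->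
  diag_upto k.+1 ((1%:M - elim_mx N k) *m N *m (1%:M - elim_mx N k)^T).
Proof.
move=> N_sym Nkk_neq0 Nk; set M := _ *m N *m _.
have M_sym : M^T = M by rewrite /M !trmx_mul trmxK N_sym mulmxA.
have S_le (i : 'I_n) : (i <= k)%N -> elim_mx N k i k = 0.
  by rewrite mxE eqxx ltnNge => ->.
have NS (j : 'I_n) : j != k -> N k k * elim_mx N k j k = N k j.
  move=> ne_jk; rewrite mxE eqxx /=; have [lt_kj|le_jk] := ltnP k j.
    by rewrite mulrC divfK // -[in LHS]N_sym mxE.
  rewrite mulr0 Nk //; first by rewrite eq_sym.
  by rewrite ltnn ltn_neqAle le_jk andbT; apply: ne_jk.
suff M0 (i j : 'I_n) : i != j -> (i <= k)%N -> M i j = 0.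
  move=> i j ne_ij; rewrite !ltnS => /orP[/(M0 _ _ ne_ij) // | le_jk].
  by rewrite -M_sym mxE M0 // eq_sym.
move=> ne_ij le_ik; rewrite congr_elim_mx_entry S_le // !mul0r !subr0 addr0.
move: le_ik; rewrite leq_eqVlt => /orP[/eqP/val_inj eq_ik | lt_ik].
  by rewrite eq_ik NS ?subrr // -eq_ik eq_sym.
by rewrite !Nk ?lt_ik // ?mul0r ?subr0 // -val_eqE ltn_eqF.
Qed.

Lemma unit_lower1D_elim N k : unit_lower (1%:M + elim_mx N k).
Proof.
move=> i j le_ij; rewrite !mxE; case: (j == k) / eqP => [jk|_]; last by rewrite addr0.
by rewrite ltnNge -jk le_ij addr0.
Qed.

Lemma unitmx_gram_diag_gt0 H i : H \in unitmx -> 0 < (H *m H^T) i i.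
Proof.
move=> uH; have sq_ge0 l : 0 <= H i l * H^T l i by rewrite mxE -expr2 sqr_ge0.
rewrite mxE lt_def sumr_ge0 ?andbT //; apply/negP => /eqP/psumr_eq0P H0.
have := congr1 (fun M : 'M[R]_n => M i i) (mulmxV uH).
rewrite /= !mxE eqxx big1 => [/eqP|l _].
  by rewrite eq_sym oner_eq0.
have /eqP := H0 (fun l _ => sq_ge0 l) l isT; rewrite mxE mulf_eq0 orbb => /eqP ->.
by rewrite mul0r.
Qed.

Lemma gram_schmidt_step m G : (m < n)%N ->
  (exists A H, [/\ unit_lower A, H \in unitmx, A *m H = G & diag_upto m (H *m H^T)]) ->
  exists A H, [/\ unit_lower A, H \in unitmx, A *m H = G & diag_upto m.+1 (H *m H^T)].
Proof.
move=> lt_mn [A [H [Al uH AHG HH]]]; pose k := Ordinal lt_mn.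
pose S := elim_mx (H *m H^T) k.
have S_inv : (1%:M + S) *m (1%:M - S) = 1%:M.
  by rewrite mulmxDl !mulmxBr !mul1mx mulmx1 elim_mx_sqr subr0 subrK.
exists (A *m (1%:M + S)), ((1%:M - S) *m H); split.
- exact/unit_lowerM/unit_lower1D_elim.
- by rewrite unitmx_mul uH andbT; case: (mulmx1_unit S_inv).
- by rewrite -mulmxA (mulmxA _ _ H) S_inv mul1mx.
have -> : (1%:M - S) *m H *m ((1%:M - S) *m H)^T = (1%:M - S) *m (H *m H^T) *m (1%:M - S)^T.
  by rewrite trmx_mul !mulmxA.
apply: (diag_upto_congr_elim (k := k)) => //; first by rewrite trmx_mul trmxK.
by rewrite gt_eqF ?unitmx_gram_diag_gt0.
Qed.

Lemma gram_LDL G : G \in unitmx -> exists (A : 'M[R]_n) (d : 'rV[R]_n),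
  [/\ unit_lower A, forall i, 0 < d 0 i & G *m G^T = A *m diag_mx d *m A^T].
Proof.
move=> uG; have [A [H [Al uH AHG HH]]] : exists A H,
    [/\ unit_lower A, H \in unitmx, A *m H = G & diag_upto n (H *m H^T)].
  suff upto m : (m <= n)%N -> exists A H,
      [/\ unit_lower A, H \in unitmx, A *m H = G & diag_upto m (H *m H^T)] by apply: upto.
  elim: m => [_|m IHm lt_mn].
    exists 1%:M, G; split; rewrite ?unitmx1 ?mul1mx // => i j _; exact: mxE.
  exact: gram_schmidt_step lt_mn (IHm (ltnW lt_mn)).
have /diag_mxP[d HHd] : is_diag_mx (H *m H^T).
  by apply/is_diag_mxP => i j /HH -> //; rewrite ltn_ord.
exists A, d; split => // [i|]; first by have := unitmx_gram_diag_gt0 i uH; rewrite HHd mxE eqxx.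
by rewrite -AHG trmx_mul !mulmxA -(mulmxA _ H) HHd.
Qed.

End GramSchmidt.

Lemma LDL_exists (R : realType) n (G : 'M[R]_n) (a : R) : 0 < a -> G \in unitmx ->
  exists L D, [/\ strictly_lower L, pos_diag D &
                  a *: (G *m G^T) = (1%:M - L) *m invmx D *m (1%:M - L)^T].
Proof.
move=> a_gt0 uG; have [A [d [Al d_gt0 GGd]]] := gram_LDL uG.
have ad_gt0 i : 0 < a * d 0 i by rewrite mulr_gt0.
pose D := diag_mx (\row_i (a * d 0 i)^-1).
have D_pos : pos_diag D.
  by split=> [|i]; rewrite ?diag_mx_is_diag // !mxE eqxx mulr1n invr_gt0.
exists (1%:M - A), D; split=> //; first exact: strictly_lower1B.
rewrite invmx_pos_diag // opprB addrC subrK GGd.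
suff -> : diag_mx (\row_i (D i i)^-1) = a *: diag_mx d by rewrite -scalemxAr -scalemxAl.
by apply/matrixP => i j; rewrite !mxE eqxx mulr1n invrK mulrnAr.
Qed.

Lemma AGM_eq_const (R : realFieldType) n (d : 'I_n -> R) (w : R) :
  0 < w -> (forall j, 0 < d j) -> \prod_j d j = w ^+ n -> \sum_j d j <= w *+ n ->
  forall j, d j = w.
Proof.
move=> w_gt0 d_gt0 prod_d sum_d j.
have n_gt0 : (0 < n)%N by apply: leq_ltn_trans (ltn_ord j).
have [agm_le agm_eq] := leif_AGM (A := predT) (fun i _ => ltW (d_gt0 i)).
have card_n : #|@predT 'I_n| = n by rewrite cardT size_enum_ord.
rewrite /= card_n prod_d in agm_le agm_eq.
have mean_le : (\sum_i d i) / n%:R <= w by rewrite ler_pdivrMr ?ltr0n // mulr_natr.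
have mean_ge0 : 0 <= (\sum_i d i) / n%:R by rewrite divr_ge0 ?sumr_ge0 // => i _; apply: ltW.
have d_const i : d i = d j.
  have : w ^+ n == ((\sum_i d i) / n%:R) ^+ n.
    by rewrite eq_le agm_le lerXn2r // qualifE /= ?ltW.
  by rewrite agm_eq => /forall_inP/(_ i isT)/forall_inP/(_ j isT)/eqP.
have : d j ^+ n == w ^+ n.
  by rewrite -prod_d (eq_bigr _ (fun i _ => d_const i)) prodr_const card_ord.
by rewrite eqrXn2 ?ltW // => /eqP.
Qed.

Section MinTraceDAG.
Variables (R : realType) (p : nat) (Sigma C : 'M[R]_p) (a : R).
Hypotheses (a_gt0 : 0 < a) (det_C : \det C = 1) (C_diag1 : forall i, C i i = 1).
Hypothesis invSigma : invmx Sigma = a *: (C *m C^T).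

Local Notation L pi := (LDL_pair Sigma pi).1.
Local Notation D pi := (LDL_pair Sigma pi).2.

Let permute_C_unit pi : permute pi C \in unitmx.
Proof. by rewrite unitmxE det_permute det_C unitr1. Qed.

Lemma LDL_pairP pi : is_LDL Sigma pi (L pi) (D pi).
Proof.
have [L0 [D0 [L0_lower D0_pos LDL0]]] := LDL_exists a_gt0 (permute_C_unit pi).
apply: (epsilon_spec (inhabits (0, 0)) (fun LD => is_LDL Sigma pi LD.1 LD.2)).
by exists (L0, D0); split; rewrite // invSigma permuteZ permuteM permute_trmx.
Qed.

Lemma LDL_pair_congr pi :
  (1%:M - L pi) *m diag_mx (\row_j (D pi j j)^-1) *m (1%:M - L pi)^T
  = permute pi C *m diag_mx (const_mx a) *m (permute pi C)^T.
Proof.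
have [_ D_pos LDL] := LDL_pairP pi.
rewrite -invmx_pos_diag // -LDL diag_const_mx mul_mx_scalar -scalemxAl.
by rewrite invSigma permuteZ permuteM permute_trmx.
Qed.

Lemma prod_LDL_pair_diag pi : \prod_j D pi j j = a^-1 ^+ p.
Proof.
have [L_lower _ _] := LDL_pairP pi.
have := congr1 determinant (LDL_pair_congr pi).
rewrite !det_mulmx !det_tr (det_unit_lower (unit_lower1B L_lower)).
rewrite (det_permute pi C) det_C.
have -> : \det (diag_mx (\row_j (D pi j j)^-1)) = (\prod_j D pi j j)^-1.
  by rewrite det_diag -prodfV; apply: eq_bigr => j _; rewrite mxE.
rewrite diag_const_mx det_scalar !mul1r !mulr1 => /(congr1 GRing.inv).
by rewrite invrK exprVn.
Qed.

Let LDL_pair_unique pi :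
  is_trig_mx (permute pi C) \/ \row_j (D pi j j)^-1 = const_mx a ->
  permute pi C = 1%:M - L pi /\ \row_j (D pi j j)^-1 = const_mx a.
Proof.
have [L_lower D_pos _] := LDL_pairP pi.
apply: LDL_unique (LDL_pair_congr pi) => [|i|j|j]; first exact: unit_lower1B.
- by rewrite mxE C_diag1.
- by rewrite mxE invr_gt0; case: D_pos.
- by rewrite mxE.
Qed.

Lemma LDL_pair_diag_trig pi : is_trig_mx (permute pi C) -> forall j, D pi j j = a^-1.
Proof.
move=> C_trig j; have [_ /rowP/(_ j)] := LDL_pair_unique (or_introl C_trig).
by rewrite !mxE => <-; rewrite invrK.
Qed.

Lemma LDL_pair_const_diag pi :
  (forall j, D pi j j = a^-1) -> L pi = 1%:M - permute pi C.
Proof.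
move=> D_const; have e_const : \row_j (D pi j j)^-1 = const_mx a.
  by apply/rowP => j; rewrite !mxE D_const invrK.
by have [-> _] := LDL_pair_unique (or_intror e_const); rewrite opprB addrC subrK.
Qed.

Lemma mxtrace_Omegatilde pi : \tr (Omegatilde Sigma pi) = \sum_j D pi j j.
Proof. by rewrite mxtrace_permute. Qed.

Lemma min_trace_diag pi0 pi :
  min_trace_perm Sigma pi0 -> is_trig_mx (permute pi C) -> forall j, D pi0 j j = a^-1.
Proof.
move=> pi0_min C_trig; have [_ [_ D_gt0] _] := LDL_pairP pi0.
apply: AGM_eq_const; rewrite ?invr_gt0 ?prod_LDL_pair_diag //.
have := pi0_min pi; rewrite !mxtrace_Omegatilde.
by rewrite (eq_bigr _ (fun j _ => LDL_pair_diag_trig C_trig j)) sumr_const card_ord.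
Qed.

End MinTraceDAG.

Theorem lemma3 (R : realType) (p : nat) (Sigma B0 : 'M[R]_p) (omega0 : R) :
  posdef Sigma ->
  is_DAG B0 ->
  0 < omega0 ->
  Sigma = (invmx (1%:M - B0))^T *m (omega0 ^+ 2)%:M *m invmx (1%:M - B0) ->
  forall pi0 : 'S_p, min_trace_perm Sigma pi0 -> Btilde Sigma pi0 = B0.
Proof.
(* Positive definiteness of Sigma already follows from its factorisation. *)
move=> _ B0_DAG omega0_gt0 defSigma pi0 pi0_min.
set C := 1%:M - B0 in defSigma; set w := omega0 ^+ 2 in defSigma.
have w_gt0 : 0 < w by rewrite exprn_gt0.
have [pi_topo topo_lower] := DAG_topological_perm B0_DAG.
have C_topo : unit_lower (permute pi_topo C).
  by rewrite permuteB permute1; apply: unit_lower1B.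
have det_C : \det C = 1 by rewrite -(det_permute pi_topo) det_unit_lower.
have C_diag1 i : C i i = 1 by rewrite !mxE eqxx DAG_diag0 // subr0.
have invSigma : invmx Sigma = w^-1 *: (C *m C^T).
  by rewrite defSigma invmx_congr_scalar ?unitmxE ?det_C ?unitr1 ?unitfE ?gt_eqF.
have w_inv_gt0 : 0 < w^-1 by rewrite invr_gt0.
have D0_const :=
  min_trace_diag w_inv_gt0 det_C C_diag1 invSigma pi0_min (unit_lower_trig C_topo).
rewrite /Btilde (LDL_pair_const_diag w_inv_gt0 det_C C_diag1 invSigma D0_const).
by rewrite permuteB permute1 permuteK /C opprB addrC subrK.
Qed.
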